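(* Let $k>1$ and let $f:\mathbb{R}\to\mathbb{R}$ be a positive, continuously differentiable function, and consider the planar system $$\frac{dI}{d\tau}=I\,[f(R)(1-I-R)-k],\qquad \frac{dR}{d\tau}=(k-1)I-R.$$ If $f(0)/k<1$ and $(0,0)$ is the only equilibrium point of this system, then $(0,0)$ is globally stable.
   Context: Here ''globally stable'' means: $(0,0)$ is locally asymptotically stable and every solution with initial condition $(I(0),R(0))$ in the region $Z=\{(I,R): 0\le I\le 1,\ 0\le R\le 1,\ I+R\le 1\}$ (the region corresponding to meaningful population proportions, which is positively invariant) converges to $(0,0)$ as $\tau\to\infty$. *)

From Stdlib Require Import Reals.
From Coquelicot Require Import Coquelicot.
Open Scope R_scope.

Definition FI (f : R -> R) (k I Rv : R) : R := I * (f Rv * (1 - I - Rv) - k).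
Definition FR (k I Rv : R) : R := (k - 1) * I - Rv.

Definition is_solution (f : R -> R) (k : R) (T : Rbar) (x y : R -> R) : Prop :=
  forall t : R, 0 <= t -> Rbar_lt t T ->
    is_derive x t (FI f k (x t) (y t)) /\ is_derive y t (FR k (x t) (y t)).

Definition in_Z (I Rv : R) : Prop :=
  0 <= I <= 1 /\ 0 <= Rv <= 1 /\ I + Rv <= 1.

Definition is_equilibrium (f : R -> R) (k I Rv : R) : Prop :=
  FI f k I Rv = 0 /\ FR k I Rv = 0.

Definition dist0 (I Rv : R) : R := sqrt (I ^ 2 + Rv ^ 2).

Definition stable_origin (f : R -> R) (k : R) : Prop :=
  forall eps : R, 0 < eps -> exists delta : R, 0 < delta /\
    forall (T : Rbar) (x y : R -> R), Rbar_lt 0 T -> is_solution f k T x y ->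
      dist0 (x 0) (y 0) < delta ->
      forall t : R, 0 <= t -> Rbar_lt t T -> dist0 (x t) (y t) < eps.

Definition converges_origin (x y : R -> R) : Prop :=
  is_lim x p_infty 0 /\ is_lim y p_infty 0.

Definition attractive_origin (f : R -> R) (k : R) : Prop :=
  exists delta : R, 0 < delta /\
    forall x y : R -> R, is_solution f k p_infty x y ->
      dist0 (x 0) (y 0) < delta -> converges_origin x y.

Definition loc_asympt_stable_origin (f : R -> R) (k : R) : Prop :=
  stable_origin f k /\ attractive_origin f k.

(* Global stability as defined in the paper (relative to the region Z). *)
Definition globally_stable_origin (f : R -> R) (k : R) : Prop :=
  loc_asympt_stable_origin f k /\
  forall x y : R -> R, is_solution f k p_infty x y ->
    in_Z (x 0) (y 0) -> converges_origin x y.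

(* Near the origin the rate [f R (1 - I - R) - k] is close to [f 0 - k < 0], so the weighted
   form [I^2 + c R^2], with [c (k-1)^2] small, decays exponentially along solutions: this is
   local asymptotic stability.  Solutions starting in [Z] keep [I, R >= 0] (the line [I = 0]
   is invariant, and [R' >= - R] once [I >= 0]).  The equilibria in [Z] are the points
   [(u, (k-1) u)] with [f ((k-1) u) (1 - k u) = k], so uniqueness of the equilibrium and
   compactness give [f ((k-1) u) (1 - k u) - k <= - gam < 0] for all [u >= 0].  Hence the box
   [I < th B e^(-lam t), R < (k-1) B e^(-lam t)] is never left: on its faces the vector field
   points inwards, and a first-exit-time argument turns this into invariance. *)

From Stdlib Require Import Reals Lra Classical.
From Coquelicot Require Import Coquelicot.
Open Scope R_scope.

Lemma exp_le_1 (a : R) : a <= 0 -> exp a <= 1.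
Proof.
  intros Ha. rewrite <- exp_0. destruct (Rle_lt_or_eq_dec _ _ Ha) as [Hlt | ->]; [| lra].
  apply Rlt_le, exp_increasing, Hlt.
Qed.

Lemma abs_le_of_sq_le (a d : R) : 0 <= d -> a ^ 2 <= d ^ 2 -> Rabs a <= d.
Proof.
  intros Hd H. rewrite <- (Rabs_pos_eq d) by exact Hd.
  apply Rsqr_le_abs_0. rewrite !Rsqr_pow2. exact H.
Qed.

Lemma sq_le_of_exp_bound (h : R) (A lam t : R) : 0 <= h < A * exp (- (lam * t)) ->
  h ^ 2 <= A ^ 2 * exp (- (2 * lam * t)).
Proof.
  intros Hh. replace (- (2 * lam * t)) with (- (lam * t) + - (lam * t)) by ring.
  rewrite exp_plus. pose proof (exp_pos (- (lam * t))). nra.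
Qed.

Lemma is_derive_continuous (h : R -> R) (s l : R) : is_derive h s l -> continuous h s.
Proof. intros Dh. exact (ex_derive_continuous (V := R_NormedModule) h s (ex_intro _ l Dh)). Qed.

Lemma is_derive_sub_exp (h : R -> R) (t dh K mu : R) : is_derive h t dh ->
  is_derive (fun s => h s - K * exp (- (mu * s))) t (dh + mu * K * exp (- (mu * t))).
Proof.
  intros Dh. auto_derive.
  - exists dh; exact Dh.
  - replace (Derive (fun s => h s) t) with dh by (symmetry; apply is_derive_unique, Dh). ring.
Qed.

Lemma is_derive_mul_exp (h : R -> R) (t dh a : R) : is_derive h t dh ->
  is_derive (fun s => h s * exp (a * s)) t ((dh + a * h t) * exp (a * t)).
Proof.
  intros Dh. auto_derive.
  - exists dh; exact Dh.
  - replace (Derive (fun s => h s) t) with dh by (symmetry; apply is_derive_unique, Dh). ring.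
Qed.

Lemma is_derive_quadratic (x y : R -> R) (c t dx dy : R) : is_derive x t dx -> is_derive y t dy ->
  is_derive (fun s => x s ^ 2 + c * y s ^ 2) t (2 * x t * dx + c * (2 * y t * dy)).
Proof.
  intros Dx Dy. auto_derive.
  - split; [exists dx; exact Dx | split; [exists dy; exact Dy | exact I]].
  - replace (Derive (fun s => x s) t) with dx by (symmetry; apply is_derive_unique, Dx).
    replace (Derive (fun s => y s) t) with dy by (symmetry; apply is_derive_unique, Dy). ring.
Qed.

Lemma Rle_of_derive_nonneg (h d : R -> R) (a b : R) : a <= b ->
  (forall s, a <= s <= b -> is_derive h s (d s)) ->
  (forall s, a <= s <= b -> 0 <= d s) -> h a <= h b.
Proof.
  intros Hab Dh Hd. destruct (Req_dec a b) as [<- | Hne]; [lra |].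
  destruct (MVT_cor2 h d a b) as [c [Hc Hac]]; [lra | |].
  - intros s Hs. apply is_derive_Reals, Dh, Hs.
  - assert (0 <= d c) by (apply Hd; lra). nra.
Qed.

Lemma zero_propagates (h g : R -> R) (a b C : R) : a <= b ->
  (forall s, a <= s <= b -> is_derive h s (h s * g s)) ->
  (forall s, a <= s <= b -> Rabs (g s) <= C) -> h a = 0 -> h b = 0.
Proof.
  intros Hab Dh Hg Ha.
  (* [- h^2 e^(-2Cs)] is nondecreasing and vanishes at [a] *)
  assert (Hmono := Rle_of_derive_nonneg (fun s => - h s ^ 2 * exp (- (2 * C) * s))
    (fun s => (- (2 * h s * (h s * g s)) + - (2 * C) * - h s ^ 2) * exp (- (2 * C) * s)) a b Hab).
  cbv beta in Hmono. rewrite Ha in Hmono.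
  assert (Hb : 0 <= - h b ^ 2 * exp (- (2 * C) * b)).
  { replace 0 with (- 0 ^ 2 * exp (- (2 * C) * a)) by ring. apply Hmono.
    - intros s Hs. apply (is_derive_mul_exp (fun s => - h s ^ 2)).
      auto_derive; [exists (h s * g s); apply Dh, Hs |].
      replace (Derive (fun s => h s) s) with (h s * g s)
        by (symmetry; apply is_derive_unique, Dh, Hs).
      ring.
    - intros s Hs. pose proof (Rle_abs (g s)). pose proof (Hg s Hs).
      pose proof (exp_pos (- (2 * C) * s)). pose proof (pow2_ge_0 (h s)).
      replace ((- (2 * h s * (h s * g s)) + - (2 * C) * - h s ^ 2) * exp (- (2 * C) * s))
        with (2 * h s ^ 2 * (C - g s) * exp (- (2 * C) * s)) by ring.
      apply Rmult_le_pos; [apply Rmult_le_pos |]; lra. }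
  pose proof (exp_pos (- (2 * C) * b)). pose proof (pow2_ge_0 (h b)).
  apply Rsqr_0_uniq, Rle_antisym; unfold Rsqr; nra.
Qed.

Lemma bounded_on_segment (g : R -> R) (a b : R) : a <= b ->
  (forall s, a <= s <= b -> continuous g s) ->
  exists C, forall s, a <= s <= b -> Rabs (g s) <= C.
Proof.
  intros Hab Hc.
  destruct (continuity_ab_maj (fun s => Rabs (g s)) a b Hab) as [m [Hm _]].
  - intros s Hs. apply continuity_pt_filterlim, continuous_Rabs_comp, Hc, Hs.
  - exists (Rabs (g m)). exact Hm.
Qed.

Lemma neg_bounded_away_on_segment (g : R -> R) (a b : R) : a <= b ->
  (forall s, a <= s <= b -> continuous g s) -> g a < 0 ->
  (forall s, a <= s <= b -> g s <> 0) ->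
  exists gam, 0 < gam /\ forall s, a <= s <= b -> g s <= - gam.
Proof.
  intros Hab Hc Ha Hz.
  destruct (continuity_ab_maj g a b Hab) as [m [Hm Hmab]].
  { intros s Hs. apply continuity_pt_filterlim, Hc, Hs. }
  exists (- g m). split; [| intros s Hs; rewrite Ropp_involutive; exact (Hm s Hs)].
  destruct (Rtotal_order (g m) 0) as [Hneg | [Hzero | Hpos]]; [lra | now destruct (Hz m Hmab) |].
  assert (Ham : a < m) by (destruct (Req_dec a m) as [<- |]; lra).
  destruct (Ranalysis5.IVT_interv g a m) as [z [Hz' Ez]]; auto.
  - intros s Hs. apply continuity_pt_filterlim, Hc. lra.
  - destruct (Hz z); [lra | exact Ez].
Qed.

Lemma locally_lt_of_continuous (h : R -> R) (s a : R) :
  continuous h s -> h s < a -> exists e, 0 < e /\ forall r, Rabs (r - s) < e -> h r < a.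
Proof.
  intros Hc Hs. destruct (Hc _ (open_lt a (h s) Hs)) as [e He].
  exists e. split; [apply cond_pos | intros r Hr; exact (He r Hr)].
Qed.

Lemma point_left_of (a s e : R) : a < s -> 0 < e ->
  exists r, a <= r < s /\ Rabs (r - s) < e.
Proof.
  intros Has He. exists ((Rmax a (s - e) + s) / 2).
  assert (Rmax a (s - e) < s) by (apply Rmax_lub_lt; lra).
  pose proof (Rmax_l a (s - e)). pose proof (Rmax_r a (s - e)).
  split; [lra |]. rewrite Rabs_left; lra.
Qed.

Lemma nonpos_of_neg_before (h : R -> R) (a s : R) : continuous h s -> a < s ->
  (forall r, a <= r < s -> h r < 0) -> h s <= 0.
Proof.
  intros Hc Has Hneg. apply Rnot_lt_le. intros Hpos.
  destruct (locally_lt_of_continuous (fun r => - h r) s 0) as [e [He Hnear]].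
  - apply (continuous_opp h), Hc.
  - lra.
  - destruct (point_left_of a s e Has He) as [r [Hr Hrs]].
    specialize (Hnear r Hrs). specialize (Hneg r Hr). lra.
Qed.

Lemma neg_of_neg_before (h : R -> R) (a s l : R) : is_derive h s l -> a < s ->
  (forall r, a <= r < s -> h r < 0) -> (h s = 0 -> l < 0) -> h s < 0.
Proof.
  intros Dh Has Hneg Hzero.
  destruct (Rle_lt_or_eq_dec _ _ (nonpos_of_neg_before h a s
    (is_derive_continuous h s l Dh) Has Hneg)) as [| Hs]; [assumption | exfalso].
  (* a zero crossing with negative slope forces [h > 0] just before [s] *)
  apply is_derive_Reals in Dh.
  destruct (Dh (- l / 2)) as [e He]; [specialize (Hzero Hs); lra |].
  destruct (point_left_of a s e Has (cond_pos e)) as [r [Hr Hrs]].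
  assert (Hne : r - s <> 0) by lra.
  specialize (He (r - s) Hne Hrs). replace (s + (r - s)) with r in He by ring.
  specialize (Hneg r Hr). specialize (Hzero Hs). rewrite Hs in He.
  apply Rabs_def2 in He. destruct He as [He1 He2].
  assert (Hq : (h r - 0) / (r - s) < l / 2) by lra.
  apply (Rmult_lt_compat_r (s - r)) in Hq; [| lra].
  replace ((h r - 0) / (r - s) * (s - r)) with (- h r) in Hq by (field; lra).
  nra.
Qed.

Lemma neg2_of_neg2_before (h1 h2 : R -> R) (a s l1 l2 : R) :
  is_derive h1 s l1 -> is_derive h2 s l2 -> a < s ->
  (forall r, a <= r < s -> h1 r < 0 /\ h2 r < 0) ->
  (h1 s = 0 -> h2 s <= 0 -> l1 < 0) -> (h2 s = 0 -> h1 s <= 0 -> l2 < 0) ->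
  h1 s < 0 /\ h2 s < 0.
Proof.
  intros D1 D2 Has Hbefore Hface1 Hface2.
  assert (Hn1 : h1 s <= 0).
  { apply (nonpos_of_neg_before h1 a s (is_derive_continuous _ _ _ D1) Has).
    intros r Hr. apply Hbefore, Hr. }
  assert (Hn2 : h2 s <= 0).
  { apply (nonpos_of_neg_before h2 a s (is_derive_continuous _ _ _ D2) Has).
    intros r Hr. apply Hbefore, Hr. }
  split.
  - apply (neg_of_neg_before h1 a s l1 D1 Has); [intros r Hr; apply Hbefore, Hr |].
    intros Hz. exact (Hface1 Hz Hn2).
  - apply (neg_of_neg_before h2 a s l2 D2 Has); [intros r Hr; apply Hbefore, Hr |].
    intros Hz. exact (Hface2 Hz Hn1).
Qed.

Lemma stays_negative2 (h1 h2 d1 d2 : R -> R) (a b : R) : a <= b ->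
  (forall s, a <= s <= b -> is_derive h1 s (d1 s) /\ is_derive h2 s (d2 s)) ->
  h1 a < 0 -> h2 a < 0 ->
  (forall s, a < s <= b -> h1 s = 0 -> h2 s <= 0 -> d1 s < 0) ->
  (forall s, a < s <= b -> h2 s = 0 -> h1 s <= 0 -> d2 s < 0) ->
  h1 b < 0 /\ h2 b < 0.
Proof.
  intros Hab D H1a H2a Hface1 Hface2.
  set (good s := a <= s <= b /\ forall r, a <= r <= s -> h1 r < 0 /\ h2 r < 0).
  assert (Hgood_a : good a).
  { split; [lra |]. intros r Hr. replace r with a by lra. auto. }
  destruct (completeness good) as [sg [Hub Hlub]].
  { exists b. intros s [Hs _]. lra. }
  { exists a. exact Hgood_a. }
  assert (Hsg : a <= sg <= b).
  { split; [apply Hub, Hgood_a | apply Hlub; intros s [Hs _]; lra]. }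
  assert (Hbefore : forall r, a <= r < sg -> h1 r < 0 /\ h2 r < 0).
  { intros r Hr. destruct (classic (h1 r < 0 /\ h2 r < 0)) as [| Hbad]; [assumption | exfalso].
    assert (sg <= r); [| lra].
    apply Hlub. intros s [_ Hs]. apply Rnot_lt_le. intros Hrs. apply Hbad, Hs. lra. }
  assert (Hat : h1 sg < 0 /\ h2 sg < 0).
  { destruct (Req_dec a sg) as [<- | Hne]; [auto |].
    destruct (D sg Hsg) as [D1 D2].
    apply (neg2_of_neg2_before h1 h2 a sg (d1 sg) (d2 sg)); auto; [lra | |];
      intros; [apply Hface1 | apply Hface2]; auto; lra. }
  assert (Hend : sg = b).
  { destruct (Req_dec sg b) as [| Hne]; [assumption | exfalso].
    destruct (D sg Hsg) as [D1 D2].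
    destruct (locally_lt_of_continuous h1 sg 0 (is_derive_continuous _ _ _ D1) (proj1 Hat))
      as [e1 [He1 Hnear1]].
    destruct (locally_lt_of_continuous h2 sg 0 (is_derive_continuous _ _ _ D2) (proj2 Hat))
      as [e2 [He2 Hnear2]].
    set (s' := Rmin b (sg + Rmin e1 e2 / 2)).
    assert (Hs' : sg < s' <= sg + Rmin e1 e2 / 2).
    { pose proof (Rmin_pos e1 e2 He1 He2). unfold s'.
      split; [apply Rmin_glb_lt; lra | apply Rmin_r]. }
    assert (good s').
    { split; [assert (s' <= b) by apply Rmin_l; lra |].
      intros r Hr. destruct (Rlt_le_dec r sg); [apply Hbefore; lra |].
      pose proof (Rmin_l e1 e2). pose proof (Rmin_r e1 e2).
      split; [apply Hnear1 | apply Hnear2]; rewrite Rabs_pos_eq; lra. }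
    assert (s' <= sg) by (apply Hub; assumption). lra. }
  rewrite <- Hend. exact Hat.
Qed.

Lemma stays_negative (h d : R -> R) (a b : R) : a <= b ->
  (forall s, a <= s <= b -> is_derive h s (d s)) -> h a < 0 ->
  (forall s, a < s <= b -> h s = 0 -> d s < 0) -> h b < 0.
Proof.
  intros Hab Dh Ha Hface.
  apply (stays_negative2 h h d d a b Hab); auto.
Qed.

Lemma is_lim_exp_decay (mu : R) : 0 < mu -> is_lim (fun t => exp (- (mu * t))) p_infty 0.
Proof.
  intros Hmu.
  apply (is_lim_comp exp (fun t => - (mu * t)) p_infty 0 m_infty).
  - exact is_lim_exp_m.
  - apply is_lim_spec. intros M. exists (- M / mu). intros t Ht.
    apply (Rmult_lt_compat_l mu) in Ht; [|lra].
    replace (mu * (- M / mu)) with (- M) in Ht by (field; lra). lra.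
  - exists 0. easy.
Qed.

Lemma is_lim_of_sq_le_exp (h : R -> R) (C mu : R) : 0 < mu ->
  (forall t, 0 <= t -> h t ^ 2 <= C * exp (- (mu * t))) -> is_lim h p_infty 0.
Proof.
  intros Hmu Hh.
  assert (Hsq : is_lim (fun t => h t ^ 2) p_infty 0).
  { apply (is_lim_le_le_loc (fun _ => 0) (fun t => C * exp (- (mu * t)))).
    - exists 0. intros t Ht. split; [apply pow2_ge_0 | apply Hh; lra].
    - apply is_lim_const.
    - replace (Finite 0) with (Rbar_mult C 0) by (simpl; f_equal; ring).
      apply is_lim_scal_l, is_lim_exp_decay, Hmu. }
  assert (Habs : is_lim (fun t => Rabs (h t)) p_infty 0).
  { rewrite <- sqrt_0. apply (is_lim_ext (fun t => sqrt (h t ^ 2))).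
    - intros t. rewrite <- Rsqr_pow2. apply sqrt_Rsqr_abs.
    - apply is_lim_comp_continuous; [exact Hsq | apply continuous_sqrt]. }
  apply (is_lim_le_le_loc (fun t => - Rabs (h t)) (fun t => Rabs (h t))).
  - exists 0. intros t _.
    split; [apply Ropp_le_cancel; rewrite Ropp_involutive, <- Rabs_Ropp |]; apply Rle_abs.
  - replace (Finite 0) with (Rbar_opp 0) by (simpl; f_equal; ring). apply is_lim_opp, Habs.
  - exact Habs.
Qed.

(* The left-hand side is the derivative of [I^2 + c R^2] along the system when the
   rate [f R (1 - I - R) - k] is [g]; the cross term is absorbed because [c (k-1)^2 <= kap]. *)
Lemma lyapunov_derivative_bound (k c kap a b g : R) : 0 < c -> c * (k - 1) ^ 2 <= kap ->
  g <= - kap ->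
  2 * a * (a * g) + c * (2 * b * ((k - 1) * a - b)) <= - Rmin kap 1 * (a ^ 2 + c * b ^ 2).
Proof.
  intros Hc Hck Hg.
  assert (Hcross : 2 * c * (k - 1) * a * b <= c * (k - 1) ^ 2 * a ^ 2 + c * b ^ 2).
  { assert (0 <= c * ((k - 1) * a - b) ^ 2) by (apply Rmult_le_pos; [lra | apply pow2_ge_0]). nra. }
  pose proof (Rmin_l kap 1). pose proof (Rmin_r kap 1).
  pose proof (pow2_ge_0 a). pose proof (pow2_ge_0 b).
  assert (0 <= c * b ^ 2) by nra. nra.
Qed.

Lemma dist0_lt_iff (a b e : R) : 0 < e -> dist0 a b < e <-> a ^ 2 + b ^ 2 < e ^ 2.
Proof.
  intros He. unfold dist0. rewrite <- (sqrt_pow2 e) at 1 by lra. split.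
  - apply sqrt_lt_0_alt.
  - intros H. apply sqrt_lt_1_alt. split; [nra | exact H].
Qed.

Section Model.

Variables (f : R -> R) (k : R).
Hypothesis k_gt_1 : 1 < k.
Hypothesis f_pos : forall r, 0 < f r.
Hypothesis f_derivable : forall r, ex_derive f r.

Lemma f_continuous (r : R) : continuous f r.
Proof. exact (ex_derive_continuous (V := R_NormedModule) f r (f_derivable r)). Qed.

Definition rate (I Rv : R) : R := f Rv * (1 - I - Rv) - k.

Lemma FI_rate (I Rv : R) : FI f k I Rv = I * rate I Rv.
Proof. reflexivity. Qed.

Lemma rate_continuous (x y : R -> R) (s : R) : continuous x s -> continuous y s ->
  continuous (fun s => rate (x s) (y s)) s.
Proof.
  intros Cx Cy. unfold rate.
  apply (continuous_minus (fun s => f (y s) * (1 - x s - y s)) (fun _ => k));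
    [| apply continuous_const].
  apply (continuous_mult (fun s => f (y s)) (fun s => 1 - x s - y s)).
  - apply (continuous_comp y f); [exact Cy | apply f_continuous].
  - apply (continuous_minus (fun s => 1 - x s) y); [| exact Cy].
    apply (continuous_minus (fun _ => 1) x); [apply continuous_const | exact Cx].
Qed.

Lemma solution_derive (T : Rbar) (x y : R -> R) (t s : R) : is_solution f k T x y ->
  Rbar_lt t T -> 0 <= s <= t ->
  is_derive x s (FI f k (x s) (y s)) /\ is_derive y s (FR k (x s) (y s)).
Proof.
  intros Hsol Ht Hs. apply Hsol; [lra |].
  apply (Rbar_le_lt_trans _ t); [simpl; lra | exact Ht].
Qed.

(* [I = 0] is invariant, so a solution can never cross it. *)
Lemma solution_I_nonneg (T : Rbar) (x y : R -> R) (t : R) : is_solution f k T x y ->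
  0 <= x 0 -> 0 <= t -> Rbar_lt t T -> 0 <= x t.
Proof.
  intros Hsol Hx0 Ht HtT.
  assert (D := fun s Hs => solution_derive T x y t s Hsol HtT Hs).
  assert (Cx : forall s, 0 <= s <= t -> continuous x s)
    by (intros s Hs; exact (is_derive_continuous _ _ _ (proj1 (D s Hs)))).
  destruct (bounded_on_segment (fun s => rate (x s) (y s)) 0 t Ht) as [C HC].
  { intros s Hs. apply rate_continuous; [apply Cx, Hs |].
    exact (is_derive_continuous _ _ _ (proj2 (D s Hs))). }
  apply Rnot_lt_le. intros Hxt.
  assert (Hzero : exists z, 0 <= z <= t /\ x z = 0).
  { destruct (Req_dec (x 0) 0) as [E | Hne]; [exists 0; split; [lra | exact E] |].
    destruct (Ranalysis5.IVT_interv (fun s => - x s) 0 t) as [z [Hz Ez]]; try lra.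
    - intros s Hs. apply continuity_pt_filterlim, (continuous_opp x), Cx, Hs.
    - assert (0 < t) by (destruct (Req_dec t 0) as [-> |]; lra). lra.
    - exists z. split; [exact Hz | lra]. }
  destruct Hzero as [z [Hz Ez]].
  assert (x t = 0); [| lra].
  apply (zero_propagates x (fun s => rate (x s) (y s)) z t C); try lra.
  - intros s Hs. rewrite <- FI_rate. apply D. lra.
  - intros s Hs. apply HC. lra.
Qed.

Lemma solution_R_nonneg (T : Rbar) (x y : R -> R) (t : R) : is_solution f k T x y ->
  (forall s, 0 <= s <= t -> 0 <= x s) -> 0 <= y 0 -> 0 <= t -> Rbar_lt t T -> 0 <= y t.
Proof.
  intros Hsol Hx Hy0 Ht HtT.
  assert (Hmono := Rle_of_derive_nonneg (fun s => y s * exp (1 * s))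
    (fun s => (FR k (x s) (y s) + 1 * y s) * exp (1 * s)) 0 t Ht).
  cbv beta in Hmono. rewrite Rmult_0_r, exp_0, Rmult_1_r in Hmono.
  assert (y 0 <= y t * exp (1 * t)).
  { apply Hmono.
    - intros s Hs. apply is_derive_mul_exp, (solution_derive T x y t s Hsol HtT Hs).
    - intros s Hs. unfold FR. pose proof (Hx s Hs). pose proof (exp_pos (1 * s)).
      replace ((k - 1) * x s - y s + 1 * y s) with ((k - 1) * x s) by ring.
      apply Rmult_le_pos; [apply Rmult_le_pos |]; lra. }
  pose proof (exp_pos (1 * t)). nra.
Qed.

Lemma solution_nonneg (T : Rbar) (x y : R -> R) (t : R) : is_solution f k T x y ->
  0 <= x 0 -> 0 <= y 0 -> 0 <= t -> Rbar_lt t T -> 0 <= x t /\ 0 <= y t.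
Proof.
  intros Hsol Hx0 Hy0 Ht HtT. split; [exact (solution_I_nonneg T x y t Hsol Hx0 Ht HtT) |].
  apply (solution_R_nonneg T x y t Hsol); [| exact Hy0 | exact Ht | exact HtT].
  intros s Hs. apply (solution_I_nonneg T x y s Hsol Hx0 (proj1 Hs)).
  apply (Rbar_le_lt_trans _ t); [simpl; lra | exact HtT].
Qed.

Hypothesis f0_lt_k : f 0 < k.

Lemma rate_negative_near_origin : exists del kap, 0 < del /\ 0 < kap /\
  forall a b, Rabs a <= del -> Rabs b <= del -> rate a b <= - kap.
Proof.
  set (kap := (k - f 0) / 2).
  assert (Hkap : 0 < kap) by (unfold kap; lra).
  pose proof (f_pos 0) as Hf0.
  destruct (locally_lt_of_continuous f 0 (f 0 + kap / 2)) as [e [He Hnear]];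
    [apply f_continuous | lra |].
  set (del := Rmin (e / 2) (kap / (4 * (f 0 + kap)))).
  assert (Hdel_e : del <= e / 2) by apply Rmin_l.
  assert (Hdel_kap : 4 * del * (f 0 + kap) <= kap).
  { assert (del <= kap / (4 * (f 0 + kap))) by apply Rmin_r.
    apply (Rmult_le_compat_r (4 * (f 0 + kap))) in H; [| lra].
    replace (kap / (4 * (f 0 + kap)) * (4 * (f 0 + kap))) with kap in H by (field; lra). lra. }
  exists del, kap. split; [apply Rmin_pos; [lra | apply Rdiv_lt_0_compat; lra] |].
  split; [exact Hkap |].
  intros a b Ha Hb. unfold rate.
  assert (Hfb : f b < f 0 + kap / 2) by (apply Hnear; rewrite Rminus_0_r; lra).
  pose proof (f_pos b). pose proof (Rle_abs (- a)). pose proof (Rle_abs (- b)).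
  rewrite Rabs_Ropp in *.
  assert (Hdel : 0 <= del) by (pose proof (Rabs_pos a); lra).
  assert (f b * (1 - a - b) <= f b * (1 + 2 * del)) by (apply Rmult_le_compat_l; lra).
  unfold kap in *. nra.
Qed.

Lemma lyapunov_decrease_near_origin : exists c rho nu, 0 < c <= 1 /\ 0 < rho /\ 0 < nu /\
  forall a b, a ^ 2 + c * b ^ 2 <= rho ->
  2 * a * FI f k a b + c * (2 * b * FR k a b) <= - nu * (a ^ 2 + c * b ^ 2).
Proof.
  destruct rate_negative_near_origin as [del [kap [Hdel [Hkap Hrate]]]].
  set (c := Rmin 1 (kap / (k - 1) ^ 2)).
  assert (Hc : 0 < c <= 1).
  { split; [| apply Rmin_l].
    apply Rmin_pos; [lra | apply Rdiv_lt_0_compat; [lra | apply pow_lt; lra]]. }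
  assert (Hck : c * (k - 1) ^ 2 <= kap).
  { assert (c <= kap / (k - 1) ^ 2) by apply Rmin_r.
    apply (Rmult_le_compat_r ((k - 1) ^ 2)) in H; [| apply pow2_ge_0].
    replace (kap / (k - 1) ^ 2 * (k - 1) ^ 2) with kap in H by (field; lra). exact H. }
  exists c, (c * del ^ 2), (Rmin kap 1). split; [exact Hc |].
  split; [apply Rmult_lt_0_compat; [lra | apply pow_lt, Hdel] |].
  split; [apply Rmin_pos; lra |].
  intros a b Hsmall. pose proof (pow2_ge_0 a). pose proof (pow2_ge_0 b).
  assert (Ha : Rabs a <= del) by (apply abs_le_of_sq_le; nra).
  assert (Hb : Rabs b <= del) by (apply abs_le_of_sq_le; [lra | apply (Rmult_le_reg_l c); nra]).
  rewrite FI_rate.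
  exact (lyapunov_derivative_bound k c kap a b (rate a b) (proj1 Hc) Hck (Hrate a b Ha Hb)).
Qed.

Lemma local_lyapunov_decay : exists c rho mu, 0 < c <= 1 /\ 0 < rho /\ 0 < mu /\
  forall L T x y, 0 < L <= rho -> is_solution f k T x y -> x 0 ^ 2 + c * y 0 ^ 2 < L ->
  forall t, 0 <= t -> Rbar_lt t T -> x t ^ 2 + c * y t ^ 2 < L * exp (- (mu * t)).
Proof.
  destruct lyapunov_decrease_near_origin as [c [rho [nu [Hc [Hrho [Hnu Hdecr]]]]]].
  exists c, rho, (nu / 2). split; [exact Hc |]. split; [exact Hrho |]. split; [lra |].
  intros L T x y HL Hsol H0 t Ht HtT.
  cut (x t ^ 2 + c * y t ^ 2 - L * exp (- (nu / 2 * t)) < 0); [lra |].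
  apply (stays_negative (fun s => x s ^ 2 + c * y s ^ 2 - L * exp (- (nu / 2 * s)))
    (fun s => 2 * x s * FI f k (x s) (y s) + c * (2 * y s * FR k (x s) (y s))
              + nu / 2 * L * exp (- (nu / 2 * s))) 0 t Ht).
  - intros s Hs. destruct (solution_derive T x y t s Hsol HtT Hs) as [Dx Dy].
    apply is_derive_sub_exp, is_derive_quadratic; assumption.
  - rewrite Rmult_0_r, Ropp_0, exp_0. lra.
  - intros s [Hs _] Hface. cbv beta in Hface.
    set (V := L * exp (- (nu / 2 * s))) in *.
    assert (HV : 0 < V) by (apply Rmult_lt_0_compat; [lra | apply exp_pos]).
    assert (V <= L) by (assert (exp (- (nu / 2 * s)) <= 1) by (apply exp_le_1; nra); unfold V; nra).
    specialize (Hdecr (x s) (y s) ltac:(lra)).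
    replace (x s ^ 2 + c * y s ^ 2) with V in Hdecr by lra.
    assert (0 < nu * V) by (apply Rmult_lt_0_compat; lra).
    replace (nu / 2 * L * exp (- (nu / 2 * s))) with (nu * V / 2) by (unfold V; field).
    lra.
Qed.

Lemma origin_loc_asympt_stable : loc_asympt_stable_origin f k.
Proof.
  destruct local_lyapunov_decay as [c [rho [mu [Hc [Hrho [Hmu Hdecay]]]]]].
  assert (Hstart : forall L x y, 0 < L -> dist0 (x 0) (y 0) < sqrt L ->
                   x 0 ^ 2 + c * y 0 ^ 2 < L).
  { intros L x y HL Hd. apply dist0_lt_iff in Hd; [| apply sqrt_lt_R0, HL].
    rewrite pow2_sqrt in Hd by lra. pose proof (pow2_ge_0 (y 0)). nra. }
  split.
  - intros eps Heps. set (L := Rmin rho (c * eps ^ 2)).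
    assert (HL : 0 < L)
      by (apply Rmin_pos; [lra | apply Rmult_lt_0_compat; [lra | apply pow_lt, Heps]]).
    exists (sqrt L). split; [apply sqrt_lt_R0, HL |].
    intros T x y _ Hsol Hd t Ht HtT. apply dist0_lt_iff; [exact Heps |].
    assert (Hbound := Hdecay L T x y (conj HL (Rmin_l _ _)) Hsol (Hstart L x y HL Hd) t Ht HtT).
    assert (L <= c * eps ^ 2) by apply Rmin_r.
    assert (exp (- (mu * t)) <= 1) by (apply exp_le_1; nra).
    pose proof (pow2_ge_0 (x t)). pose proof (pow2_ge_0 (y t)).
    apply (Rmult_lt_reg_l c); nra.
  - exists (sqrt rho). split; [apply sqrt_lt_R0, Hrho |].
    intros x y Hsol Hd.
    assert (Hbound := fun t Ht => Hdecay rho p_infty x y (conj Hrho (Rle_refl _)) Hsol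
                                   (Hstart rho x y Hrho Hd) t Ht I).
    split.
    + apply (is_lim_of_sq_le_exp x rho mu Hmu). intros t Ht.
      specialize (Hbound t Ht). pose proof (pow2_ge_0 (y t)). nra.
    + apply (is_lim_of_sq_le_exp y (rho / c) mu Hmu). intros t Ht.
      specialize (Hbound t Ht). pose proof (pow2_ge_0 (x t)).
      apply (Rmult_le_reg_l c); [lra |].
      replace (c * (rho / c * exp (- (mu * t)))) with (rho * exp (- (mu * t))) by (field; lra).
      lra.
Qed.

Hypothesis no_other_equilibrium :
  forall I Rv, in_Z I Rv -> is_equilibrium f k I Rv -> I = 0 /\ Rv = 0.

(* The equilibria [(u, (k-1) u)] in [Z] are the zeros of the rate on the isocline
   [R = (k-1) I] with [k u <= 1]; beyond [k u = 1] the rate is below [- k]. *)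
Lemma isocline_rate_bound : exists gam, 0 < gam /\
  forall u, 0 <= u -> rate u ((k - 1) * u) <= - gam.
Proof.
  assert (Hk0 : 0 < / k) by (apply Rinv_0_lt_compat; lra).
  assert (Hrate0 : rate 0 ((k - 1) * 0) < 0).
  { unfold rate. rewrite Rmult_0_r. lra. }
  destruct (neg_bounded_away_on_segment (fun u => rate u ((k - 1) * u)) 0 (/ k))
    as [gam [Hgam Hbound]]; [lra | | exact Hrate0 | |].
  - intros u _. apply (rate_continuous (fun u => u) (fun u => (k - 1) * u));
      [apply continuous_id |].
    apply (continuous_mult (fun _ => k - 1) (fun u => u));
      [apply continuous_const | apply continuous_id].
  - intros u Hu Hzero.
    assert (Hku : k * u <= 1).
    { replace 1 with (k * / k) by (field; lra). apply Rmult_le_compat_l; lra. }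
    destruct (no_other_equilibrium u ((k - 1) * u)) as [-> _].
    + repeat split; nra.
    + split; [rewrite FI_rate, Hzero; ring | unfold FR; ring].
    + lra.
  - exists (Rmin gam k). split; [apply Rmin_pos; lra |].
    intros u Hu. pose proof (Rmin_l gam k). pose proof (Rmin_r gam k).
    destruct (Rle_dec u (/ k)) as [Hsmall | Hlarge].
    + pose proof (Hbound u (conj Hu Hsmall)). lra.
    + assert (1 < k * u).
      { replace 1 with (k * / k) by (field; lra). apply Rmult_lt_compat_l; lra. }
      unfold rate. pose proof (f_pos ((k - 1) * u)). nra.
Qed.

(* [rate I R = rate u ((k-1) u) + f R (u - I)] with [u = R / (k-1)]. *)
Lemma rate_bound_near_isocline (gam F eta I Rv : R) :
  (forall u, 0 <= u -> rate u ((k - 1) * u) <= - gam) ->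
  0 <= Rv -> f Rv <= F -> 0 <= eta -> Rv <= (k - 1) * (I + eta) -> F * eta <= gam / 2 ->
  rate I Rv <= - gam / 2.
Proof.
  intros HG HRv HF Heta Hiso HFeta.
  set (u := Rv / (k - 1)).
  assert (Hu : (k - 1) * u = Rv) by (unfold u; field; lra).
  assert (Hu_I : u - I <= eta).
  { apply (Rmult_le_reg_l (k - 1)); lra. }
  assert (Hsplit : rate I Rv = rate u ((k - 1) * u) + f Rv * (u - I)).
  { unfold rate. rewrite Hu. ring. }
  assert (rate u ((k - 1) * u) <= - gam) by (apply HG; unfold u; apply Rdiv_le_0_compat; lra).
  pose proof (f_pos Rv). assert (f Rv * (u - I) <= f Rv * eta) by (apply Rmult_le_compat_l; lra).
  assert (f Rv * eta <= F * eta) by (apply Rmult_le_compat_r; lra).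
  lra.
Qed.

(* On the face [I = th b] of the box, [R <= (k-1) b] puts the state within
   [(1 - th) b] of the isocline, where the rate is at most [- gam / 2]. *)
Lemma exponential_box_invariant (gam F th B lam : R) (x y : R -> R) :
  (forall u, 0 <= u -> rate u ((k - 1) * u) <= - gam) ->
  0 < B -> 0 < th < 1 -> 0 < lam -> lam <= gam / 4 -> lam <= (1 - th) / 2 ->
  (forall r, 0 <= r <= (k - 1) * B -> f r <= F) -> (1 - th) * F * B <= gam / 2 ->
  is_solution f k p_infty x y -> (forall t, 0 <= t -> 0 <= y t) ->
  x 0 < th * B -> y 0 < (k - 1) * B ->
  forall t, 0 <= t -> x t < th * B * exp (- (lam * t)) /\ y t < (k - 1) * B * exp (- (lam * t)).
Proof.
  intros HG HB Hth Hlam Hlam_gam Hlam_th HF Hth_gam Hsol Hy Hx0 Hy0 t Ht.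
  cut (x t - th * B * exp (- (lam * t)) < 0 /\ y t - (k - 1) * B * exp (- (lam * t)) < 0);
    [lra |].
  apply (stays_negative2 (fun s => x s - th * B * exp (- (lam * s)))
    (fun s => y s - (k - 1) * B * exp (- (lam * s)))
    (fun s => FI f k (x s) (y s) + lam * (th * B) * exp (- (lam * s)))
    (fun s => FR k (x s) (y s) + lam * ((k - 1) * B) * exp (- (lam * s))) 0 t Ht).
  - intros s Hs. destruct (solution_derive p_infty x y t s Hsol I Hs) as [Dx Dy].
    split; apply is_derive_sub_exp; assumption.
  - rewrite Rmult_0_r, Ropp_0, exp_0. lra.
  - rewrite Rmult_0_r, Ropp_0, exp_0. lra.
  - intros s [Hs _] Hface Hother. cbv beta in Hface, Hother.
    set (b := B * exp (- (lam * s))).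
    assert (Hb : 0 < b <= B).
    { pose proof (exp_pos (- (lam * s))). assert (exp (- (lam * s)) <= 1) by (apply exp_le_1; nra).
      unfold b. split; nra. }
    assert (Hxs : x s = th * b) by (unfold b; lra).
    assert (Hys : 0 <= y s) by (apply Hy; lra).
    assert (Hrate : rate (x s) (y s) <= - gam / 2).
    { apply (rate_bound_near_isocline gam F ((1 - th) * b)); auto.
      - apply HF. split; [lra |]. unfold b in *. nra.
      - nra.
      - rewrite Hxs. unfold b. nra.
      - nra. }
    rewrite FI_rate. fold b.
    replace (x s * rate (x s) (y s) + lam * (th * B) * exp (- (lam * s)))
      with (x s * (rate (x s) (y s) + lam)) by (rewrite Hxs; unfold b; ring).
    assert (0 < x s) by (rewrite Hxs; nra). nra.
  - intros s [Hs _] Hface Hother. cbv beta in Hface, Hother.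
    pose proof (exp_pos (- (lam * s))). unfold FR.
    assert (0 < (k - 1) * B * exp (- (lam * s))) by (apply Rmult_lt_0_compat; nra).
    assert ((k - 1) * x s <= (k - 1) * (th * B * exp (- (lam * s))))
      by (apply Rmult_le_compat_l; lra).
    nra.
Qed.

Lemma solution_exponential_box (gam : R) : 0 < gam ->
  (forall u, 0 <= u -> rate u ((k - 1) * u) <= - gam) ->
  forall x y, is_solution f k p_infty x y -> 0 <= x 0 -> 0 <= y 0 ->
  exists A1 A2 lam, 0 < lam /\ forall t, 0 <= t ->
    x t < A1 * exp (- (lam * t)) /\ y t < A2 * exp (- (lam * t)).
Proof.
  intros Hgam HG x y Hsol Hx0 Hy0.
  assert (Hy : forall t, 0 <= t -> 0 <= y t)
    by (intros t Ht; exact (proj2 (solution_nonneg p_infty x y t Hsol Hx0 Hy0 Ht I))).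
  set (B := 2 * (x 0 + y 0 / (k - 1)) + 1).
  assert (Hy0k : 0 <= y 0 / (k - 1)) by (apply Rdiv_le_0_compat; lra).
  assert (HB : 0 < B) by (unfold B; lra).
  destruct (bounded_on_segment f 0 ((k - 1) * B)) as [F HF]; [nra | intros; apply f_continuous |].
  assert (HF0 : 0 < F)
    by (pose proof (f_pos 0); pose proof (Rle_abs (f 0)); pose proof (HF 0); nra).
  set (th := Rmax (1 / 2) (1 - gam / (2 * F * B))).
  assert (Hth : 1 / 2 <= th < 1).
  { split; [apply Rmax_l | apply Rmax_lub_lt; [lra |]].
    assert (0 < gam / (2 * F * B)) by (apply Rdiv_lt_0_compat; nra). lra. }
  assert (Hth_gam : (1 - th) * F * B <= gam / 2).
  { assert (1 - gam / (2 * F * B) <= th) by apply Rmax_r.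
    apply (Rmult_le_compat_r (F * B)) in H; [| nra].
    replace ((1 - gam / (2 * F * B)) * (F * B)) with (F * B - gam / 2) in H
      by (field; split; lra).
    lra. }
  set (lam := Rmin (gam / 4) ((1 - th) / 2)).
  assert (Hlam : 0 < lam) by (apply Rmin_pos; lra).
  exists (th * B), ((k - 1) * B), lam. split; [exact Hlam |].
  apply (exponential_box_invariant gam F); try lra; auto.
  - apply Rmin_l.
  - apply Rmin_r.
  - intros r Hr. pose proof (HF r Hr). pose proof (Rle_abs (f r)). lra.
  - unfold B. nra.
  - unfold B. replace ((k - 1) * (2 * (x 0 + y 0 / (k - 1)) + 1))
      with (2 * (k - 1) * x 0 + 2 * y 0 + (k - 1)) by (field; lra). nra.
Qed.

Lemma converges_from_orthant (gam : R) : 0 < gam ->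
  (forall u, 0 <= u -> rate u ((k - 1) * u) <= - gam) ->
  forall x y, is_solution f k p_infty x y -> 0 <= x 0 -> 0 <= y 0 -> converges_origin x y.
Proof.
  intros Hgam HG x y Hsol Hx0 Hy0.
  destruct (solution_exponential_box gam Hgam HG x y Hsol Hx0 Hy0) as [A1 [A2 [lam [Hlam Hbox]]]].
  assert (Hnonneg := fun t Ht => solution_nonneg p_infty x y t Hsol Hx0 Hy0 Ht I).
  split.
  - apply (is_lim_of_sq_le_exp x (A1 ^ 2) (2 * lam)); [lra |].
    intros t Ht. apply sq_le_of_exp_bound. split; [apply Hnonneg, Ht | apply Hbox, Ht].
  - apply (is_lim_of_sq_le_exp y (A2 ^ 2) (2 * lam)); [lra |].
    intros t Ht. apply sq_le_of_exp_bound. split; [apply Hnonneg, Ht | apply Hbox, Ht].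
Qed.

End Model.

Theorem lemma4 (f : R -> R) (k : R)
  (hk : 1 < k)
  (hpos : forall r : R, 0 < f r)
  (hC1 : forall r : R, ex_derive f r /\ continuous (Derive f) r)
  (h0 : f 0 / k < 1)
  (huniq : forall I Rv : R, in_Z I Rv -> is_equilibrium f k I Rv -> I = 0 /\ Rv = 0) :
  globally_stable_origin f k.
Proof.
  assert (f_derivable : forall r, ex_derive f r) by (intros r; apply hC1).
  assert (f0_lt_k : f 0 < k).
  { apply (Rmult_lt_compat_r k) in h0; [| lra].
    replace (f 0 / k * k) with (f 0) in h0 by (field; lra). lra. }
  split; [exact (origin_loc_asympt_stable f k hk hpos f_derivable f0_lt_k) |].
  intros x y Hsol [[Hx0 _] [[Hy0 _] _]].
  destruct (isocline_rate_bound f k hk hpos f_derivable f0_lt_k huniq) as [gam [Hgam HG]].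
  exact (converges_from_orthant f k hk hpos f_derivable gam Hgam HG x y Hsol Hx0 Hy0).
Qed.
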